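(* Consider the distributed quantized weight-balancing algorithm described in the context on a strongly connected digraph, with step-size $\gamma(k)=2^{-n}$ for $2^n-1\le k\le 2^{n+1}-2$. For every $k\in\mathbb{Z}_+$: if the decreasing event $\mathcal{D}_k$ occurs then $\Vert\boldsymbol{\epsilon}(k+1)\Vert_1\le\Vert\boldsymbol{\epsilon}(k)\Vert_1-2\gamma(k)$, and otherwise $\Vert\boldsymbol{\epsilon}(k+1)\Vert_1=\Vert\boldsymbol{\epsilon}(k)\Vert_1$.
   Context: $\mathcal{G}=(\mathcal{V},\mathcal{E})$, $\mathcal{V}=\{1,\dots,N\}$, no self-loops; $\mathcal{N}_i^-=\{j:(j,i)\in\mathcal{E}\}$, $\mathcal{N}_i^+=\{j:(i,j)\in\mathcal{E}\}$, $d_i^+=|\mathcal{N}_i^+|$. Algorithm: $a_{ij}(0)=1$ if $j\in\mathcal{N}_i^-$ and $0$ otherwise; $b_i(k)=\sum_{j\in\mathcal{N}_i^-}a_{ij}(k)-\sum_{j\in\mathcal{N}_i^+}a_{ji}(k)$; $n_i(k)=1$ if $b_i(k)\ge d_i^+\gamma(k)$, else $0$; $a_{ij}(k+1)=a_{ij}(k)+n_j(k)\gamma(k)$ for $j\in\mathcal{N}_i^-$. $\boldsymbol{\epsilon}(k)=(|b_i(k)|)_{i=1}^N$. The decreasing event $\mathcal{D}_k$: there exist $i\in\mathcal{V}$ and $j\in\mathcal{N}_i^+$ with $n_i(k)>0$ and $b_j(k)<0$. *)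

From mathcomp Require Import all_boot all_order all_algebra.
Set Implicit Arguments. Unset Strict Implicit. Unset Printing Implicit Defensive.
Import Order.TTheory GRing.Theory Num.Theory.
Local Open Scope ring_scope.

Section Alg.
Variables (R : realFieldType) (N : nat) (e : rel 'I_N).

Definition outdeg (i : 'I_N) : nat := #|[set j | e i j]|.

(* step size gamma(k) = 2^{-n} for 2^n - 1 <= k <= 2^{n+1} - 2,
   i.e. n = floor(log2 (k+1)) *)
Definition gamma (k : nat) : R := (2%:R ^+ trunc_log 2 k.+1)^-1.

Definition imbalance (a : 'I_N -> 'I_N -> R) (i : 'I_N) : R :=
  \sum_(j | e j i) a i j - \sum_(j | e i j) a j i.

Definition nflag (g : R) (a : 'I_N -> 'I_N -> R) (i : 'I_N) : bool :=
  (outdeg i)%:R * g <= imbalance a i.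

Fixpoint weights (k : nat) : 'I_N -> 'I_N -> R :=
  match k with
  | 0 => fun i j => if e j i then 1 else 0
  | k'.+1 => let a := weights k' in
      fun i j => if e j i then a i j + (if nflag (gamma k') a j then gamma k' else 0)
                 else a i j
  end.

Definition b (k : nat) (i : 'I_N) : R := imbalance (weights k) i.
Definition nk (k : nat) (i : 'I_N) : bool := nflag (gamma k) (weights k) i.

Definition eps_norm1 (k : nat) : R := \sum_i `|b k i|.

Definition decreasing_event (k : nat) : Prop :=
  exists i j, [/\ e i j, nk k i & b k j < 0].

End Alg.

Definition no_self_loops (N : nat) (e : rel 'I_N) : Prop := forall i, ~~ e i i.
Definition strongly_connected (N : nat) (e : rel 'I_N) : Prop :=
  forall i j, connect e i j.

From mathcomp Require Import all_boot all_order all_algebra.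
From mathcomp Require Import ring lra zify.
Set Implicit Arguments. Unset Strict Implicit. Unset Printing Implicit Defensive.
Import Order.TTheory GRing.Theory Num.Theory.
Local Open Scope ring_scope.

(* The weights and imbalances at time k are integer multiples of gamma(k), since
   gamma(k) is a power-of-two multiple of gamma(k+1); hence a negative imbalance
   is at most -gamma(k). One step moves the amount inflow_i - outflow_i into
   b_i, and the total inflow equals the total outflow, so the 1-norm drops by
   the sum of the nonnegative per-node losses |b_i| + inflow_i - outflow_i -
   |b_i(k+1)|. A firing node keeps b_i >= outflow_i >= 0 and loses nothing; an
   idle node loses 2 min(inflow_i, max(0, -b_i)). This is at least 2 gamma(k)
   for a negative out-neighbour of a firing node, and is 0 for every node when
   D_k fails. *)

Lemma normD_drop (R : realDomainType) (x p : R) : 0 <= p ->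
  `|x| + p - `|x + p| = 2%:R * Num.min p (Num.max 0 (- x)).
Proof.
move=> p0; have [x0|x0] := lerP 0 x.
  rewrite [Num.max _ _]max_l ?oppr_le0 // [Num.min _ _]min_r //.
  by rewrite !ger0_norm ?addr_ge0 //; lra.
rewrite [Num.max _ _]max_r ?oppr_ge0 ?ltW // ltr0_norm //.
have [px|px] := lerP p (- x).
  by rewrite ler0_norm; lra.
by rewrite gtr0_norm; lra.
Qed.

Section IntegerMultiples.
Variable R : numDomainType.

Definition multiple_of (g x : R) : Prop := exists z : int, x = z%:~R * g.

Lemma multiple_of0 g : multiple_of g 0.
Proof. by exists 0; rewrite mul0r. Qed.

Lemma multiple_of_refl g : multiple_of g g.
Proof. by exists 1; rewrite mul1r. Qed.

Lemma multiple_ofD g x y :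
  multiple_of g x -> multiple_of g y -> multiple_of g (x + y).
Proof. by move=> [u ->] [v ->]; exists (u + v); rewrite rmorphD mulrDl. Qed.

Lemma multiple_ofB g x y :
  multiple_of g x -> multiple_of g y -> multiple_of g (x - y).
Proof. by move=> [u ->] [v ->]; exists (u - v); rewrite rmorphB mulrBl. Qed.

Lemma multiple_of_sum (I : finType) (P : pred I) (F : I -> R) g :
  (forall i, P i -> multiple_of g (F i)) -> multiple_of g (\sum_(i | P i) F i).
Proof.
move=> gF; elim/big_rec: _ => [|i x Pi]; first exact: multiple_of0.
exact/multiple_ofD/gF.
Qed.

Lemma multiple_of_trans g h x :
  multiple_of h g -> multiple_of g x -> multiple_of h x.
Proof. by move=> [u ->] [v ->]; exists (v * u); rewrite mulrA rmorphM. Qed.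

Lemma multiple_of_lt0 g x :
  0 < g -> multiple_of g x -> x < 0 -> x <= - g.
Proof.
move=> g0 [z ->]; rewrite pmulr_llt0 // ltrz0 => z_lt0.
have : z <= -1 by lia.
rewrite -(ler_int R) rmorphN1 => zR.
by rewrite -mulN1r ler_wpM2r // ltW.
Qed.

End IntegerMultiples.

Section OneStep.
Variables (R : realFieldType) (N : nat) (e : rel 'I_N).

Notation gamma := (gamma R).
Notation weights := (weights R e).
Notation b := (b R e).
Notation nk := (nk R e).

Lemma gamma_gt0 k : 0 < gamma k.
Proof. by rewrite /gamma invr_gt0 exprn_gt0 // ltr0n. Qed.

Lemma gamma_multipleS k : multiple_of (gamma k.+1) (gamma k).
Proof.
have le_log := leq_trunc_log 2 (leqnSn k.+1).
exists (2 ^+ (trunc_log 2 k.+2 - trunc_log 2 k.+1)); rewrite rmorphXn /=.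
rewrite /gamma -{2}(subnK le_log) exprD invfM mulrA mulfV ?mul1r //.
by rewrite expf_neq0 // pnatr_eq0.
Qed.

Lemma weights_multiple k i j : multiple_of (gamma k) (weights k i j).
Proof.
elim: k i j => [|k IH] i j /=.
  rewrite /gamma trunc_log1 expr0 invr1.
  by case: (e j i); [apply: multiple_of_refl | apply: multiple_of0].
apply: multiple_of_trans (gamma_multipleS k) _.
case: (e j i) => //; apply: multiple_ofD => //.
by case: nflag; [apply: multiple_of_refl | apply: multiple_of0].
Qed.

Lemma b_le_neg_gamma k i : b k i < 0 -> b k i <= - gamma k.
Proof.
apply: multiple_of_lt0 (gamma_gt0 k) _.
by apply: multiple_ofB; apply: multiple_of_sum => j _; apply: weights_multiple.
Qed.

Lemma nk_b_ge0 k i : nk k i -> 0 <= b k i.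
Proof. by apply: le_trans; rewrite mulr_ge0 // ltW ?gamma_gt0. Qed.

Definition inflow k i := \sum_(j | e j i) (if nk k j then gamma k else 0).
Definition outflow k i := \sum_(j | e i j) (if nk k i then gamma k else 0).

Lemma inflow_ge0 k i : 0 <= inflow k i.
Proof. by apply: sumr_ge0 => j _; case: ifP => // _; apply/ltW/gamma_gt0. Qed.

Lemma outflowE k i :
  outflow k i = if nk k i then (outdeg e i)%:R * gamma k else 0.
Proof.
rewrite /outflow; case: ifP => _; last by rewrite big1.
by rewrite sumr_const /outdeg cardsE mulr_natl.
Qed.

Lemma sum_inflow k : \sum_i inflow k i = \sum_i outflow k i.
Proof.
rewrite /inflow /outflow.
under eq_bigr => i _ do rewrite big_mkcond /=.
under [RHS]eq_bigr => i _ do rewrite big_mkcond /=.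
exact: exchange_big.
Qed.

Lemma bS k i : b k.+1 i = b k i + inflow k i - outflow k i.
Proof.
rewrite /b /imbalance /inflow /outflow.
under eq_bigr => j eji do rewrite /= eji.
under [X in _ - X = _]eq_bigr => j eij do rewrite /= eij.
by rewrite !big_split /=; ring.
Qed.

Definition norm1_loss k i := `|b k i| + inflow k i - outflow k i - `|b k.+1 i|.

Lemma eps_norm1S k :
  eps_norm1 R e k.+1 = eps_norm1 R e k - \sum_i norm1_loss k i.
Proof.
rewrite /eps_norm1 /norm1_loss !sumrB big_split /= sum_inflow.
by ring.
Qed.

Lemma norm1_loss_fired k i : nk k i -> norm1_loss k i = 0.
Proof.
move=> ni; have b_ge_out : outflow k i <= b k i by rewrite outflowE ni.
have out_ge0 : 0 <= outflow k i by rewrite outflowE ni mulr_ge0 // ltW ?gamma_gt0.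
have in_ge0 := inflow_ge0 k i.
by rewrite /norm1_loss bS !ger0_norm; lra.
Qed.

Lemma norm1_loss_idle k i : ~~ nk k i ->
  norm1_loss k i = 2%:R * Num.min (inflow k i) (Num.max 0 (- b k i)).
Proof.
move=> /negbTE ni; rewrite /norm1_loss bS outflowE ni !subr0.
exact/normD_drop/inflow_ge0.
Qed.

Lemma norm1_loss_ge0 k i : 0 <= norm1_loss k i.
Proof.
have [/norm1_loss_fired -> //|/norm1_loss_idle ->] := boolP (nk k i).
by rewrite mulr_ge0 // le_min inflow_ge0 le_max lexx.
Qed.

Lemma inflow_ge_gamma k i j : e i j -> nk k i -> gamma k <= inflow k j.
Proof.
move=> eij ni; rewrite /inflow (bigD1 i) //= ni lerDl.
by apply: sumr_ge0 => l _; case: ifP => // _; apply/ltW/gamma_gt0.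
Qed.

Lemma inflow_eq0 k j : (forall i, e i j -> ~~ nk k i) -> inflow k j = 0.
Proof. by move=> idle; rewrite /inflow big1 // => i /idle /negbTE ->. Qed.

Lemma norm1_loss_ge_2gamma k i j :
  e i j -> nk k i -> b k j < 0 -> 2%:R * gamma k <= norm1_loss k j.
Proof.
move=> eij ni bj_lt0.
have /norm1_loss_idle -> : ~~ nk k j.
  by apply: contraTN bj_lt0 => /nk_b_ge0; rewrite -leNgt.
rewrite ler_pM2l ?ltr0n // le_min (inflow_ge_gamma eij ni) le_max lerNr.
by rewrite b_le_neg_gamma ?orbT.
Qed.

Lemma norm1_loss_eq0 k j :
  (forall i, e i j -> nk k i -> 0 <= b k j) -> norm1_loss k j = 0.
Proof.
move=> no_drain; have [/norm1_loss_fired //|/norm1_loss_idle ->] := boolP (nk k j).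
have [bj_ge0|bj_lt0] := lerP 0 (b k j).
  by rewrite [Num.max _ _]max_l ?oppr_le0 // [Num.min _ _]min_r ?inflow_ge0 ?mulr0.
rewrite inflow_eq0 ?[Num.min _ _]min_l ?mulr0 ?le_max ?lexx // => i eij.
by apply: contraTN bj_lt0 => /(no_drain i eij); rewrite -leNgt.
Qed.

End OneStep.

Theorem lemma1 (R : realFieldType) (N : nat) (e : rel 'I_N)
    (Hloop : no_self_loops e) (Hsc : strongly_connected e) (k : nat) :
  (decreasing_event R e k ->
     eps_norm1 R e k.+1 <= eps_norm1 R e k - 2%:R * gamma R k) /\
  (~ decreasing_event R e k -> eps_norm1 R e k.+1 = eps_norm1 R e k).
Proof.
rewrite eps_norm1S; split.
  move=> [i [j [eij ni bj_lt0]]]; rewrite lerD2l lerN2 (bigD1 j) //=.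
  rewrite -[X in X <= _]addr0 lerD ?(norm1_loss_ge_2gamma eij) //.
  by apply: sumr_ge0 => l _; apply: norm1_loss_ge0.
move=> noD; rewrite big1 ?subr0 // => j _; apply: norm1_loss_eq0 => i eij ni.
by rewrite leNgt; apply/negP => bj_lt0; apply: noD; exists i, j.
Qed.
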